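(* Let $F^\sharp$ be a skew-symmetric endomorphism of a real vector space $V$ endowed with a non-degenerate inner product $g^\flat=\langle\,,\,\rangle$ of signature $\{p,q\}$ with $p$ or $q$ non-zero. Assume $F^\sharp\circ F^\sharp=\mu\,k\otimes\boldsymbol k$ with $k\in V$ non-zero and null and $\mu\neq0$. Suppose moreover that either (i) $V$ has Lorentzian signature, or (ii) $F^\sharp(\langle k\rangle^\perp)\subset\operatorname{span}(k)$. Then there exists $w\in V$, linearly independent of and orthogonal to $k$, such that $$F^\sharp=k\otimes\boldsymbol w-w\otimes\boldsymbol k,\qquad \mu=-\langle w,w\rangle.$$ Conversely, any $F^\sharp$ of this form with $k$ null and $w$ orthogonal to $k$ satisfies $F^\sharp\circ F^\sharp=-\langle w,w\rangle\,k\otimes\boldsymbol k$.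
   Context: Skew-symmetric: $\langle F^\sharp x,y\rangle=-\langle x,F^\sharp y\rangle$. $u\otimes\boldsymbol v$ denotes the linear map $x\mapsto u\langle v,x\rangle$. $\langle k\rangle^\perp=\{x\in V:\langle k,x\rangle=0\}$. *)

From HB Require Import structures.
From mathcomp Require Import all_boot all_order all_algebra.
From mathcomp Require Import reals.
Set Implicit Arguments. Unset Strict Implicit. Unset Printing Implicit Defensive.
Import Order.TTheory GRing.Theory Num.Theory.
Local Open Scope ring_scope.

(* V = column vectors 'cV[R]_n; the inner product is given by a Gram matrix G
   (symmetric, invertible = non-degenerate): <x,y> = x^T G y. *)
Definition ip (R : realType) (n : nat) (G : 'M[R]_n) (x y : 'cV[R]_n) : R :=
  (x^T *m G *m y) 0 0.

Definition nondeg_inner (R : realType) (n : nat) (G : 'M[R]_n) : Prop :=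
  G^T = G /\ G \in unitmx.

(* u (x) v-flat : the linear map x |-> u <v, x>, as a matrix *)
Definition tens (R : realType) (n : nat) (G : 'M[R]_n) (u v : 'cV[R]_n) : 'M[R]_n :=
  u *m (v^T *m G).

Definition skew_adj (R : realType) (n : nat) (G : 'M[R]_n) (F : 'M[R]_n) : Prop :=
  forall x y, ip G (F *m x) y = - ip G x (F *m y).

(* Lorentzian signature: {1, n-1} or {n-1, 1}, i.e. G is congruent to
   diag(-s, s, ..., s) with s = +1 or -1. *)
Definition lorentzian (R : realType) (n : nat) (G : 'M[R]_n) : Prop :=
  exists (P : 'M[R]_n) (s : R), P \in unitmx /\ (s = 1 \/ s = -1) /\
    P^T *m G *m P = diag_mx (\row_(i < n) (if val i == 0%N then - s else s)).

From HB Require Import structures.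
From mathcomp Require Import all_boot all_order all_algebra.
From mathcomp Require Import reals.
Set Implicit Arguments.
Unset Strict Implicit.
Unset Printing Implicit Defensive.

Import Order.TTheory GRing.Theory Num.Theory.
Local Open Scope ring_scope.

(* Pick u with <k,u> = 1 (non-degeneracy).  Under (ii), F k lies in span(k)
   and F^2 k = mu <k,k> k = 0, so F k = 0; then w := - F u does the job, since
   every x splits as x' + <k,x> u with x' in k^perp, and F x' = <w,x'> k by
   skew-symmetry.  In Lorentzian signature (ii) is automatic: for x in k^perp,
   F x is null (<Fx,Fx> = -mu <k,x>^2) and orthogonal to k, and the only null
   vectors orthogonal to a null k are its multiples, because the spacelike
   part of the diagonalised form is definite.  Finally mu = -<w,w> is read off
   the converse identity F^2 = -<w,w> k (x) k, and mu <> 0 makes w non-null,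
   hence independent of k. *)

Section Form.
Variables (R : realType) (n : nat).
Implicit Types (G F : 'M[R]_n) (x y z u v k w : 'cV[R]_n).

Lemma ipDl G x y z : ip G (x + y) z = ip G x z + ip G y z.
Proof. by rewrite /ip linearD /= !mulmxDl mxE. Qed.

Lemma ipDr G x y z : ip G z (x + y) = ip G z x + ip G z y.
Proof. by rewrite /ip !mulmxDr mxE. Qed.

Lemma ipZl G a x y : ip G (a *: x) y = a * ip G x y.
Proof. by rewrite /ip linearZ /= -!scalemxAl mxE. Qed.

Lemma ipZr G a x y : ip G x (a *: y) = a * ip G x y.
Proof. by rewrite /ip -!scalemxAr mxE. Qed.

Lemma ipNl G x y : ip G (- x) y = - ip G x y.
Proof. by rewrite -scaleN1r ipZl mulN1r. Qed.

Lemma ipNr G x y : ip G x (- y) = - ip G x y.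
Proof. by rewrite -scaleN1r ipZr mulN1r. Qed.

Lemma ipBl G x y z : ip G (x - y) z = ip G x z - ip G y z.
Proof. by rewrite ipDl ipNl. Qed.

Lemma ipBr G x y z : ip G z (x - y) = ip G z x - ip G z y.
Proof. by rewrite ipDr ipNr. Qed.

Lemma ip0l G y : ip G 0 y = 0.
Proof. by rewrite -(scale0r 0) ipZl mul0r. Qed.

Lemma ip_diag_mx (d : 'rV[R]_n) x y :
  ip (diag_mx d) x y = \sum_i d 0 i * x i 0 * y i 0.
Proof.
rewrite /ip mul_mx_diag mxE; apply: eq_bigr => i _.
by rewrite !mxE [x _ _ * _]mulrC.
Qed.

Lemma tensE G u v x : tens G u v *m x = ip G v x *: u.
Proof. by rewrite /tens -mulmxA [_ *m x]mx11_scalar mul_mx_scalar. Qed.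

Lemma tens_skewE G k w x :
  (tens G k w - tens G w k) *m x = ip G w x *: k - ip G k x *: w.
Proof. by rewrite mulmxBl !tensE. Qed.

Lemma mulmx_col_ext F F' : (forall x, F *m x = F' *m x) -> F = F'.
Proof.
move=> eqFF'; apply/matrixP => i j.
by have /colP/(_ i) := eqFF' (delta_mx j 0); rewrite -!colE !mxE.
Qed.

Lemma null_pair_free G k w :
  k != 0 -> ip G k k = 0 -> ip G w w != 0 ->
  forall a b : R, a *: k + b *: w = 0 -> a = 0 /\ b = 0.
Proof.
move=> k0 kk ww a b.
have [-> | b0] := eqVneq b 0.
  by rewrite scale0r addr0 => /eqP; rewrite scaler_eq0 (negPf k0) orbF => /eqP.
move/eqP; rewrite addrC addr_eq0 => /eqP /(congr1 ( *:%R b^-1)).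
rewrite scalerA mulVf // scale1r => wE.
by move: ww; rewrite wE !(ipZl, ipZr, ipNl, ipNr) kk !(mulr0, oppr0) eqxx.
Qed.

Lemma lorentz_diag_anisotropic (s : R) z :
  s != 0 -> (forall i : 'I_n, val i == 0%N -> z i 0 = 0) ->
  ip (diag_mx (\row_(i < n) (if val i == 0%N then - s else s))) z z = 0 ->
  z = 0.
Proof.
move=> s0 z0; rewrite ip_diag_mx (eq_bigr (fun i => s * z i 0 ^+ 2)) => [|i _].
  rewrite -big_distrr => /eqP; rewrite mulf_eq0 (negPf s0) /=.
  rewrite psumr_eq0 => [/allP z_eq0 | i _]; last exact: sqr_ge0.
  apply/colP => i; rewrite mxE; apply/eqP; rewrite -sqrf_eq0.
  exact: z_eq0 (mem_index_enum i).
rewrite mxE expr2 mulrA.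
by case: ifP => [/z0 -> | _]; rewrite ?mulr0.
Qed.

Lemma ip_dual G k : G \in unitmx -> k != 0 -> exists u, ip G k u = 1.
Proof.
move=> G_unit k0; set y := k^T *m G.
have y0 : y != 0.
  apply: contraNneq k0 => y0.
  by rewrite -[k]trmxK -[k^T](mulmxK G_unit) -/y y0 mul0mx trmx0.
have [i yi] : exists i, y 0 i != 0.
  apply/existsP; apply: contraNT y0 => /existsPn y0.
  by apply/eqP/rowP => i; rewrite [RHS]mxE; apply/eqP/negbNE/y0.
exists ((y 0 i)^-1 *: delta_mx i 0).
by rewrite ipZr /ip -colE -/y [col _ _ _ _]mxE mulVf.
Qed.

Section Symmetric.
Variable G : 'M[R]_n.
Hypothesis G_sym : G^T = G.

Lemma ipC x y : ip G x y = ip G y x.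
Proof.
by rewrite /ip -[x^T *m G *m y]trmxK mxE !trmx_mul trmxK G_sym mulmxA.
Qed.

Lemma skew_ipxx F x : skew_adj G F -> ip G (F *m x) x = 0.
Proof.
move=> skF; have := skF x x; rewrite [ip G x _]ipC => h.
by apply/eqP; rewrite -eqNr -h.
Qed.

Lemma tens_skew_sqr k w :
  ip G k k = 0 -> ip G k w = 0 ->
  let F := tens G k w - tens G w k in F *m F = - ip G w w *: tens G k k.
Proof.
move=> kk kw F; apply: mulmx_col_ext => x.
rewrite -mulmxA !tens_skewE -scalemxAl tensE !(ipBr, ipZr) (ipC w k) kw kk.
by rewrite !(mulr0, sub0r, subrr, oppr0, scale0r, subr0) scalerA mulNr mulrC.
Qed.

Lemma lorentzian_null_perp k v :
  lorentzian G -> k != 0 -> ip G k k = 0 -> ip G v v = 0 -> ip G v k = 0 ->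
  exists c, v = c *: k.
Proof.
move=> [P [s [P_unit [s_pm1 PGP]]]] k0 kk vv vk.
have s0 : s != 0 by case: s_pm1 => ->; rewrite ?oppr_eq0 oner_eq0.
set D := diag_mx _ in PGP.
have ipP x y : ip G (P *m x) (P *m y) = ip D x y.
  by rewrite -PGP /ip trmx_mul !mulmxA.
have [k' kE] : exists k', k = P *m k' by exists (invmx P *m k); rewrite mulKVmx.
have [v' vE] : exists v', v = P *m v' by exists (invmx P *m v); rewrite mulKVmx.
have kv : ip D k' v' = 0 by rewrite -ipP -kE -vE ipC.
rewrite kE vE !ipP in k0 kk vv vk *.
have /existsP [i0 /andP [i0_0 ki0]] :
    [exists i : 'I_n, (val i == 0%N) && (k' i 0 != 0)].
  apply: contraNT k0 => /existsPn k'0.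
  rewrite (lorentz_diag_anisotropic s0 _ kk) ?mulmx0 // => i i_0.
  by apply/eqP; move: (k'0 i); rewrite i_0 negbK.
exists (v' i0 0 / k' i0 0); rewrite scalemxAr; congr (P *m _).
apply/eqP; rewrite -subr_eq0; apply/eqP; apply: (lorentz_diag_anisotropic s0).
  move=> i i_0; have -> : i = i0 by apply/val_inj; rewrite (eqP i_0) (eqP i0_0).
  by rewrite !mxE divfK // subrr.
by rewrite !(ipBl, ipBr, ipZl, ipZr) vv vk kv kk !(mulr0, subrr).
Qed.

Lemma lorentzian_skew_perp_span F k mu :
  lorentzian G -> skew_adj G F -> k != 0 -> ip G k k = 0 ->
  F *m F = mu *: tens G k k ->
  forall x, ip G k x = 0 -> exists c, F *m x = c *: k.
Proof.
move=> LG skF k0 kk FF.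
have FFE x : F *m (F *m x) = (mu * ip G k x) *: k.
  by rewrite mulmxA FF -scalemxAl tensE scalerA.
have null_Fx x : ip G k x = 0 -> ip G (F *m x) (F *m x) = 0.
  by move=> kx; rewrite skF FFE ipZr (ipC x k) kx !(mulr0, oppr0).
have [a Fk] : exists a, F *m k = a *: k.
  by apply: lorentzian_null_perp => //; [exact: null_Fx | exact: skew_ipxx].
move=> x kx; apply: lorentzian_null_perp => //; first exact: null_Fx.
by rewrite skF Fk ipZr (ipC x k) kx mulr0 oppr0.
Qed.

Hypothesis G_unit : G \in unitmx.

Lemma tens_skew_sqr_coef k w mu :
  k != 0 -> ip G k k = 0 -> ip G k w = 0 ->
  (tens G k w - tens G w k) *m (tens G k w - tens G w k) = mu *: tens G k k ->
  mu = - ip G w w.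
Proof.
move=> k0 kk kw FF; have [u ku] := ip_dual G_unit k0.
have := tens_skew_sqr kk kw; rewrite /= FF => /(congr1 (mulmx^~ u)).
rewrite -!scalemxAl tensE ku scale1r => /eqP.
by rewrite -subr_eq0 -scalerBl scaler_eq0 (negPf k0) orbF subr_eq0 => /eqP.
Qed.

Lemma skew_perp_span_form F k mu :
  skew_adj G F -> k != 0 -> ip G k k = 0 -> F *m F = mu *: tens G k k ->
  (forall x, ip G k x = 0 -> exists c, F *m x = c *: k) ->
  exists w, ip G k w = 0 /\ F = tens G k w - tens G w k.
Proof.
move=> skF k0 kk FF Fperp.
have Fk0 : F *m k = 0.
  have [c Fk] := Fperp k kk.
  have : F *m (F *m k) = (c * c) *: k by rewrite Fk -scalemxAr Fk scalerA.
  rewrite mulmxA FF -scalemxAl tensE kk scale0r scaler0 => /esym/eqP.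
  rewrite scaler_eq0 (negPf k0) orbF mulf_eq0 orbb Fk => /eqP ->.
  by rewrite scale0r.
have [u ku] := ip_dual G_unit k0.
pose w := - (F *m u).
have kw : ip G k w = 0.
  by rewrite ipNr; have := skF k u; rewrite Fk0 ip0l => <-.
have wu : ip G w u = 0 by rewrite ipNl skew_ipxx // oppr0.
exists w; split => //; apply: mulmx_col_ext => x; rewrite tens_skewE.
pose b := ip G k x; pose x' := x - b *: u.
have kx' : ip G k x' = 0 by rewrite ipBr ipZr ku mulr1 subrr.
have [d Fx'] := Fperp x' kx'.
have dE : d = ip G w x'.
  have := skF u x'; rewrite Fx' ipZr (ipC u k) ku mulr1 ipNl => ->.
  by rewrite opprK.
have wx : ip G w x' = ip G w x by rewrite ipBr ipZr wu mulr0 subr0.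
have Fu : F *m u = - w by rewrite opprK.
by rewrite -[in LHS](subrK (b *: u) x) mulmxDr Fx' -scalemxAr Fu dE wx scalerN.
Qed.

End Symmetric.
End Form.

Theorem mainTheorem14 (R : realType) (n : nat) (G : 'M[R]_n) :
  nondeg_inner G ->
  (forall (F : 'M[R]_n) (k : 'cV[R]_n) (mu : R),
     skew_adj G F ->
     k != 0 -> ip G k k = 0 -> mu != 0 ->
     F *m F = mu *: tens G k k ->
     (lorentzian G \/
      (forall x, ip G k x = 0 -> exists c : R, F *m x = c *: k)) ->
     exists w : 'cV[R]_n,
       (forall a b : R, a *: k + b *: w = 0 -> a = 0 /\ b = 0) /\
       ip G k w = 0 /\
       F = tens G k w - tens G w k /\
       mu = - ip G w w)
  /\
  (forall k w : 'cV[R]_n,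
     ip G k k = 0 -> ip G k w = 0 ->
     let F := tens G k w - tens G w k in
     F *m F = - ip G w w *: tens G k k).
Proof.
move=> [G_sym G_unit].
split=> [F k mu skF k0 kk mu0 FF Lorentz_or_perp | k w];
  last exact: tens_skew_sqr.
have Fperp : forall x, ip G k x = 0 -> exists c, F *m x = c *: k.
  by case: Lorentz_or_perp => [LG | //]; exact: lorentzian_skew_perp_span FF.
have [w [kw FE]] := skew_perp_span_form G_sym G_unit skF k0 kk FF Fperp.
have muE : mu = - ip G w w.
  by apply: (tens_skew_sqr_coef G_sym G_unit k0 kk kw); rewrite -FE.
exists w; split=> //; apply: null_pair_free k0 kk _.
by rewrite -oppr_eq0 -muE.
Qed.
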